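(* The Kurepa conjecture, namely that $\gcd({!n},n!)=2$ for every integer $n\ge2$, is equivalent to the statement that $\gcd\big(\mathbb{F}_n,(n+1)!\big)=2$ for every integer $n\ge1$.
   Context: For a positive integer $n$, the Kurepa left factorial is ${!n}=\sum_{m=0}^{n-1}m!$. For $n\ge1$, $\mathbb{F}_n=\sum_{k=0}^n k!$. *)

From mathcomp Require Import all_boot.

Definition left_fact (n : nat) : nat := \sum_(0 <= m < n) m`!.

Definition F_sum (n : nat) : nat := \sum_(0 <= k < n.+1) k`!.

From mathcomp Require Import all_boot.

Lemma F_sum_left_fact (n : nat) : F_sum n = left_fact n.+1.
Proof. by []. Qed.

Theorem theorem17 :
  (forall n : nat, 2 <= n -> gcdn (left_fact n) n`! = 2) <->
  (forall n : nat, 1 <= n -> gcdn (F_sum n) n.+1`! = 2).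
Proof.
split=> [kurepa n n_gt0 | kurepaF [|[|n]] // _].
- by rewrite F_sum_left_fact; apply: kurepa.
- by rewrite -F_sum_left_fact; apply: kurepaF.
Qed.
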